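(* Let $\Gamma=(V,E)$ be a graph of order $n$, minimum degree $\delta$ and maximum degree $\Delta$. (a) If $S$ is an $r$-dependent set in $\Gamma$ with $r\in\{0,\dots,\lfloor\frac{\delta-1}{2}\rfloor\}$, then $\overline{S}$ is a global offensive $(\delta-2r)$-alliance in $\Gamma$. (b) If $S$ is a global offensive $k$-alliance in $\Gamma$ with $k\in\{2-\Delta,\dots,\Delta\}$, then $\overline{S}$ is a $\left\lfloor\frac{\Delta-k}{2}\right\rfloor$-dependent set in $\Gamma$. (c) If $\Gamma$ is $\delta$-regular with $\delta>0$, then for $r\in\{0,\dots,\lfloor\frac{\delta-1}{2}\rfloor\}$, $S$ is an $r$-dependent set in $\Gamma$ if and only if $\overline{S}$ is a global offensive $(\delta-2r)$-alliance in $\Gamma$.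
   Context: Graphs are finite and simple. For $S\subseteq V$ and $v\in V$, $\delta_S(v)$ is the number of neighbours of $v$ in $S$, $\overline{S}=V\setminus S$, and $\partial(S)$ is the set of vertices of $\overline{S}$ with at least one neighbour in $S$. For an integer $k$, a nonempty set $S\subseteq V$ is an offensive $k$-alliance if $\delta_S(v)\ge\delta_{\overline{S}}(v)+k$ for every $v\in\partial(S)$; it is a global offensive $k$-alliance if moreover it is dominating (every vertex of $\overline{S}$ has a neighbour in $S$). A set $S\subseteq V$ is $r$-dependent if $\delta_S(v)\le r$ for every $v\in S$ (the induced subgraph on $S$ has maximum degree at most $r$). *)

From HB Require Import structures.
From mathcomp Require Import all_boot all_order all_algebra.
Set Implicit Arguments. Unset Strict Implicit. Unset Printing Implicit Defensive.
Import Order.TTheory GRing.Theory Num.Theory.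

Definition simple_graph (T : finType) (e : rel T) : Prop := symmetric e /\ irreflexive e.

Definition nbr (T : finType) (e : rel T) (v : T) (S : {set T}) : nat :=
  #|[set u in S | e v u]|.

Definition deg (T : finType) (e : rel T) (v : T) : nat := #|[set u | e v u]|.

(* minimum / maximum degree (for a nonempty vertex set; degrees are < #|T|) *)
Definition mindeg (T : finType) (e : rel T) : nat := \big[minn/#|T|]_(v : T) deg e v.
Definition maxdeg (T : finType) (e : rel T) : nat := \max_(v : T) deg e v.

Definition boundary (T : finType) (e : rel T) (S : {set T}) : {set T} :=
  [set v in ~: S | [exists u in S, e v u]].

Definition offensive_alliance (T : finType) (e : rel T) (k : int) (S : {set T}) : Prop :=
  S != set0 /\
  forall v, v \in boundary e S -> ((nbr e v S)%:Z >= (nbr e v (~: S))%:Z + k)%R.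

Definition dominating (T : finType) (e : rel T) (S : {set T}) : Prop :=
  forall v, v \in ~: S -> exists2 u, u \in S & e v u.

Definition global_offensive_alliance (T : finType) (e : rel T) (k : int) (S : {set T}) : Prop :=
  offensive_alliance e k S /\ dominating e S.

Definition dependent (T : finType) (e : rel T) (r : nat) (S : {set T}) : Prop :=
  forall v, v \in S -> nbr e v S <= r.

(* Every vertex has [deg v = δ_S(v) + δ_{~S}(v)].  A global offensive
   k-alliance A is dominating, so its boundary is all of ~A and the alliance
   condition becomes [δ_{~A}(v) + k <= δ_A(v)] for every [v ∉ A].  Taking
   A := ~S, together with the degree bounds this linear inequality is
   equivalent to an upper bound on δ_S(v) for [v ∈ S], i.e. to S being
   dependent. *)
From HB Require Import structures.
From mathcomp Require Import all_boot all_order all_algebra.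
From mathcomp Require Import intdiv zify.
Import Order.TTheory GRing.Theory Num.Theory.

Section Alliances.

Variables (T : finType) (e : rel T).

Lemma deg_nbr_setC (v : T) (S : {set T}) :
  deg e v = nbr e v S + nbr e v (~: S).
Proof.
rewrite /deg /nbr -(cardsID S [set u | e v u]).
by congr (_ + _); apply: eq_card => u; rewrite !inE andbC.
Qed.

Lemma mindeg_le_deg (v : T) : mindeg e <= deg e v.
Proof.
rewrite /mindeg; elim: (index_enum T) (mem_index_enum v) => // u s IH.
rewrite big_cons inE => /predU1P[<-|/IH]; first exact: geq_minl.
exact/leq_trans/geq_minr.
Qed.

Lemma deg_le_maxdeg (v : T) : deg e v <= maxdeg e.
Proof. exact: (leq_bigmax (F := deg e)). Qed.

Lemma boundary_dominating (A : {set T}) :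
  dominating e A -> boundary e A = ~: A.
Proof.
move=> domA; apply/setP => v; rewrite !inE andb_idr // => vA.
have [u uA evu] : exists2 u, u \in A & e v u by apply: domA; rewrite inE.
by apply/existsP; exists u; rewrite uA.
Qed.

Lemma global_offensive_allianceE {k : int} {A : {set T}} :
  global_offensive_alliance e k A ->
  forall v, v \notin A -> ((nbr e v (~: A))%:Z + k <= (nbr e v A)%:Z)%R.
Proof.
move=> [[_ allA] domA] v vA; apply: allA.
by rewrite boundary_dominating // inE.
Qed.

(* A positive margin forces a neighbour in A, so domination (and, on a
   nonempty vertex set, nonemptiness of A) comes for free. *)
Lemma global_offensive_alliance_margin (k : int) (A : {set T}) :
  0 < #|T| -> (0 < k)%R ->
  (forall v, v \notin A -> ((nbr e v (~: A))%:Z + k <= (nbr e v A)%:Z)%R) ->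
  global_offensive_alliance e k A.
Proof.
move=> T_gt0 k_gt0 marginA.
have nbrA_gt0 v : v \notin A -> 0 < nbr e v A.
  by move=> vA; have := marginA v vA; lia.
have domA : dominating e A.
  move=> v; rewrite inE => /nbrA_gt0; rewrite /nbr card_gt0.
  by case/set0Pn=> u; rewrite inE => /andP[uA evu]; exists u.
split=> //; split.
  apply/set0Pn; case/card_gt0P: T_gt0 => v _.
  have [vA | vA] := boolP (v \in A); first by exists v.
  by case: (domA v) => [|u uA _]; [rewrite inE | exists u].
by move=> v; rewrite boundary_dominating // inE; apply: marginA.
Qed.

Lemma dependent_global_offensive_alliance_setC (d r : nat) (S : {set T}) :
  0 < #|T| -> (forall v, d <= deg e v) -> 2 * r < d ->
  dependent e r S -> global_offensive_alliance e (d%:Z - (2 * r)%:Z)%R (~: S).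
Proof.
move=> T_gt0 deg_ge r_lt depS.
apply: global_offensive_alliance_margin => // [|v]; first lia.
rewrite inE negbK setCK => vS; have := depS v vS.
have := deg_nbr_setC v S; have := deg_ge v; lia.
Qed.

Lemma global_offensive_alliance_dependent_setC (d : nat) (k : int) (S : {set T}) :
  (forall v, deg e v <= d) -> (k <= d%:Z)%R ->
  global_offensive_alliance e k S -> dependent e (`|(d%:Z - k)%R|%N)./2 (~: S).
Proof.
move=> deg_le k_le goaS v; rewrite inE => vS.
have := global_offensive_allianceE goaS v vS.
have := deg_nbr_setC v S; have := deg_le v; lia.
Qed.

Lemma global_offensive_alliance_setC_dependent (d r : nat) (S : {set T}) :
  (forall v, deg e v = d) ->
  global_offensive_alliance e (d%:Z - (2 * r)%:Z)%R (~: S) -> dependent e r S.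
Proof.
move=> deg_eq goaSC v vS.
have := global_offensive_allianceE goaSC v; rewrite setCK inE negbK.
move=> /(_ vS); have := deg_nbr_setC v S; have := deg_eq v; lia.
Qed.

End Alliances.

Theorem mainTheorem2 (T : finType) (e : rel T) :
  simple_graph e -> 0 < #|T| ->
  (forall (r : nat) (S : {set T}),
      (r%:Z <= (((mindeg e)%:Z - 1) %/ 2)%Z)%R ->
      dependent e r S ->
      global_offensive_alliance e ((mindeg e)%:Z - (2 * r)%:Z)%R (~: S)) /\
  (forall (k : int) (S : {set T}),
      (2%:Z - (maxdeg e)%:Z <= k)%R -> (k <= (maxdeg e)%:Z)%R ->
      global_offensive_alliance e k S ->
      dependent e (`|((maxdeg e)%:Z - k)%R|%N)./2 (~: S)) /\
  ((forall v, deg e v = mindeg e) -> 0 < mindeg e ->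
   forall (r : nat) (S : {set T}),
      (r%:Z <= (((mindeg e)%:Z - 1) %/ 2)%Z)%R ->
      (dependent e r S <->
       global_offensive_alliance e ((mindeg e)%:Z - (2 * r)%:Z)%R (~: S))).
Proof.
move=> _ T_gt0.
have partA r S : (r%:Z <= (((mindeg e)%:Z - 1) %/ 2)%Z)%R -> dependent e r S ->
    global_offensive_alliance e ((mindeg e)%:Z - (2 * r)%:Z)%R (~: S).
  move=> r_le; apply: dependent_global_offensive_alliance_setC => //.
    exact: mindeg_le_deg.
  lia.
split=> //; split.
  move=> k S _; apply: global_offensive_alliance_dependent_setC.
  exact: deg_le_maxdeg.
move=> deg_eq _ r S r_le; split; first exact: partA.
exact: global_offensive_alliance_setC_dependent.
Qed.
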